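(* Let $\delta\in\{0,1\}$, $l>0$, let $g\geq 0$ and $n\geq 0$ be integers, let $a,b\in\frac12\mathbb{Z}$ with $2b\equiv 2\delta a \pmod 2$, and let $\mu\neq\emptyset$ be a partition with $\|\mu\|=2b$. Then the subspace of the moduli space $\mathcal{M}_{g,n}(\mathbb{T}M_\delta,(a,b),\mu)$ parametrizing simple tropical curves has dimension $|\mu|+g-1+n$.
   Context: For $\delta\in\{0,1\}$ and $l>0$ let $\varphi_\delta:\mathbb{R}^2\to\mathbb{R}^2$, $\varphi_\delta(x,y)=(x+l,\delta x-y)$. The tropical Möbius strip $\mathbb{T}M_\delta$ is the quotient $\mathbb{R}^2/\langle\varphi_\delta\rangle$ with the integral affine structure induced by $\mathbb{Z}^2\subset\mathbb{R}^2$; it projects onto the tropical elliptic curve $\mathbb{T}E=\mathbb{R}/l\mathbb{Z}$ via $(x,y)\mapsto x$. An abstract tropical curve is a finite metric graph $\Gamma$ whose edges are bounded edges (finite length) or ends (unbounded, infinite length, adjacent to a single vertex); its genus is $g=1-\chi(\Gamma)$. A parametrized tropical curve is a map $h:\Gamma\to\mathbb{T}M_\delta$ that is affine on each edge with integer slope (derivative in $\mathbb{Z}^2$ in the affine charts coming from $\mathbb{R}^2$) and is balanced: at each vertex the sum of outgoing slopes is $0$. The weight of an edge is the integral length of its slope. The curve is simple if $\Gamma$ is trivalent and $h$ is an immersion. The tropical homology group is $H_{1,1}(\mathbb{T}M_\delta,\mathbb{Z})=\{aE+bF: a,b\in\frac12\mathbb{Z},\ 2b\equiv 2\delta a \bmod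 2\}$, where $F$ is the class of a fiber of the projection to $\mathbb{T}E$ and $E$ the class of the boundary at infinity; a curve has class $aE+bF$ when its ends (which are vertical rays) have total weight $2b$ and its tropical intersection number with a fiber is $2a$. For a partition $\mu$ written as multiplicities $(\mu_i)_{i\ge1}$, $|\mu|=\sum_i\mu_i$ and $\|\mu\|=\sum_i i\mu_i$; a curve has tangency profile $\mu$ if it has exactly $\mu_i$ ends of weight $i$ for each $i$. $\mathcal{M}_{g,n}(\mathbb{T}M_\delta,(a,b),\mu)$ denotes the moduli space of genus $g$ parametrized tropical curves in $\mathbb{T}M_\delta$ of class $aE+bF$ with tangency profile $\mu$ and $n$ marked points on $\Gamma$; it is a polyhedral complex whose cells correspond to combinatorial types (the graph together with the slopes of $h$), a curve in a cell being parametrized by its edge lengths (including positions of marked points) and the image of a vertex. *)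

From HB Require Import structures.
From mathcomp Require Import all_boot all_order all_algebra.
From mathcomp Require Import reals.
Set Implicit Arguments. Unset Strict Implicit. Unset Printing Implicit Defensive.
Import Order.TTheory GRing.Theory Num.Theory.
Local Open Scope ring_scope.

Section Mobius.
Variable R : realType.
Variable delta : bool.
Variable l : R.

Definition phi (p : R * R) : R * R := (p.1 + l, (delta%:R) * p.1 - p.2).
Definition phi_inv (p : R * R) : R * R := (p.1 - l, (delta%:R) * (p.1 - l) - p.2).
Definition phi_iter (k : int) (p : R * R) : R * R :=
  match k with Posz m => iter m phi p | Negz m => iter m.+1 phi_inv p end.
End Mobius.

(* linear part of phi_delta acting on integer slopes: (sx,sy) |-> (sx, delta sx - sy);
   it is its own inverse *)
Definition linA (delta : bool) (s : int * int) : int * int :=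
  (s.1, (nat_of_bool delta)%:Z * s.1 - s.2).
Definition linA_iter (delta : bool) (k : int) (s : int * int) : int * int :=
  match k with Posz m => iter m (linA delta) s | Negz m => iter m.+1 (linA delta) s end.

(* Vertices 'I_nv, bounded edges 'I_ne (oriented src -> tgt), ends 'I_nend.
   Each vertex v has a chosen lift P_v in R^2 (a point of the cell).  A bounded
   edge e leaves the lift P_(src e) with slope [eslope e] (in the chart of R^2),
   and after length len_e reaches Q = P_(src e) + len_e * eslope e, with
   P_(tgt e) = phi^(twist e) Q.  An end j is a ray from P_(endv j) with slope
   [endslope j].  Marked point j lies in the interior of the bounded edge or end
   [mark j]. *)
Record ctype (n : nat) := CType {
  nv : nat; ne : nat; nend : nat;
  src : 'I_ne -> 'I_nv; tgt : 'I_ne -> 'I_nv;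
  eslope : 'I_ne -> int * int; twist : 'I_ne -> int;
  endv : 'I_nend -> 'I_nv; endslope : 'I_nend -> int * int;
  mark : 'I_n -> 'I_ne + 'I_nend }.
Arguments nv {n} c. Arguments ne {n} c. Arguments nend {n} c.
Arguments src {n} c _. Arguments tgt {n} c _. Arguments eslope {n} c _.
Arguments twist {n} c _. Arguments endv {n} c _. Arguments endslope {n} c _.
Arguments mark {n} c _.

Section Types.
Variable delta : bool.
Variable n : nat.
Variable T : ctype n.

(* outgoing slopes of all half-edges at v, in the chart of the lift P_v *)
Definition outgoing (v : 'I_(nv T)) : seq (int * int) :=
  [seq eslope T e | e <- enum 'I_(ne T) & src T e == v] ++
  [seq - linA_iter delta (twist T e) (eslope T e) | e <- enum 'I_(ne T) & tgt T e == v] ++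
  [seq endslope T j | j <- enum 'I_(nend T) & endv T j == v].

Definition adj : rel 'I_(nv T) := fun u v =>
  [exists e, ((src T e == u) && (tgt T e == v)) || ((src T e == v) && (tgt T e == u))].

Definition connected_type : Prop := forall u v, connect adj u v.

(* genus g = 1 - chi(Gamma) = #bounded edges - #vertices + 1 *)
Definition has_genus (g : nat) : Prop := (ne T + 1 = nv T + g)%N.

Definition balanced : Prop := forall v, \sum_(s <- outgoing v) s = 0.

Definition trivalent : Prop := forall v, size (outgoing v) = 3%N.

Definition pos_parallel (s t : int * int) : bool :=
  (s.1 * t.2 - s.2 * t.1 == 0) && (0 < s.1 * t.1 + s.2 * t.2).

(* h is an immersion (locally injective): no contracted edge, and at every
   vertex no two half-edges leave in the same direction *)
Definition immersion : Prop := forall v,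
  all (fun s => s != 0) (outgoing v) &&
  pairwise (fun s t => ~~ pos_parallel s t) (outgoing v).

Definition weight (s : int * int) : nat := gcdn `|s.1|%N `|s.2|%N.

Definition ends_vertical : Prop := forall j, (endslope T j).1 = 0.

(* tangency profile mu, given as mu = [:: mu_1; mu_2; ...] (multiplicities) *)
Definition has_profile (mu : seq nat) : Prop :=
  forall i : nat, (0 < i)%N ->
    #|[pred j : 'I_(nend T) | weight (endslope T j) == i]| = nth 0%N mu i.-1.

End Types.

Definition mu_card (mu : seq nat) : nat := sumn mu.
Definition mu_norm (mu : seq nat) : nat := \sum_(i < size mu) (i.+1 * nth 0%N mu i)%N.

Definition simple_type (delta : bool) (g n : nat) (mu : seq nat) (T : ctype n) : Prop :=
  [/\ connected_type T, has_genus T g, balanced delta T, trivalent delta T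
    & [/\ immersion delta T, ends_vertical T & has_profile T mu]].

Section Cells.
Variable R : realType.
Variable delta : bool.
Variable l : R.
Variable n : nat.
Variable T : ctype n.

(* a point of the parameter space: x- and y-coordinates of the vertex lifts,
   lengths of bounded edges, positions of marked points on their edges *)
Definition cellpt : lmodType R :=
  (('rV[R]_(nv T) * 'rV[R]_(nv T)) * ('rV[R]_(ne T) * 'rV[R]_n))%type.

Definition vpos (X : cellpt) (v : 'I_(nv T)) : R * R :=
  (X.1.1 ord0 v, X.1.2 ord0 v).
Definition elen (X : cellpt) (e : 'I_(ne T)) : R := X.2.1 ord0 e.
Definition mpos (X : cellpt) (j : 'I_n) : R := X.2.2 ord0 j.

Definition in_cell (X : cellpt) : Prop :=
  [/\ forall e, 0 < elen X e,
      forall e, vpos X (tgt T e) =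
        phi_iter delta l (twist T e)
          ((vpos X (src T e)).1 + elen X e * ((eslope T e).1)%:~R,
           (vpos X (src T e)).2 + elen X e * ((eslope T e).2)%:~R)
    & forall j, match mark T j with
                | inl e => 0 < mpos X j < elen X e
                | inr _ => 0 < mpos X j end].

Definition is_intR (x : R) : Prop := exists m : int, x = m%:~R.

(* c is generic: the fiber {x = c} contains no image of a vertex *)
Definition generic_fiber (X : cellpt) (c : R) : Prop :=
  forall v, ~ is_intR (((vpos X v).1 - c) / l).

(* number of times the (lift of the) bounded edge e crosses the fiber over c,
   i.e. #{m in Z | c + m l strictly between the x-coordinates of its endpoints},
   valid for generic c *)
Definition crossings (X : cellpt) (e : 'I_(ne T)) (c : R) : int :=
  let x0 := (vpos X (src T e)).1 in
  let x1 := x0 + elen X e * ((eslope T e).1)%:~R in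
  `| Num.floor ((x1 - c) / l) - Num.floor ((x0 - c) / l) |.

(* tropical intersection number with the fiber over generic c
   (ends are vertical, hence do not meet generic fibers) *)
Definition fiber_int (X : cellpt) (c : R) : int :=
  \sum_(e < ne T) `|(eslope T e).1| * crossings X e c.

(* class aE + bF with a2 = 2a, b2 = 2b *)
Definition has_class (a2 b2 : int) (X : cellpt) : Prop :=
  [/\ ends_vertical T,
      (\sum_(j < nend T) weight (endslope T j))%:Z = b2
    & forall c, generic_fiber X c -> fiber_int X c = a2].

Definition locus (a2 b2 : int) (X : cellpt) : Prop := in_cell X /\ has_class a2 b2 X.

End Cells.

Definition aff_indep (R : realType) (V : lmodType R) (d : nat)
    (p : 'I_d.+1 -> V) : Prop :=
  forall c : 'I_d -> R,
    \sum_(i < d) c i *: (p (lift ord0 i) - p ord0) = 0 -> forall i, c i = 0.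

Definition has_dim (R : realType) (V : lmodType R) (X : V -> Prop) (d : nat) : Prop :=
  (exists p : 'I_d.+1 -> V, (forall i, X (p i)) /\ aff_indep p) /\
  (forall p : 'I_d.+2 -> V, (forall i, X (p i)) -> ~ aff_indep p).

Arguments locus {R} delta l {n} T a2 b2 X.
Arguments cellpt R {n} T.

From HB Require Import structures.
From mathcomp Require Import all_boot all_order all_algebra.
From mathcomp Require Import reals.
From mathcomp Require Import ring lra zify.
Set Implicit Arguments. Unset Strict Implicit. Unset Printing Implicit Defensive.
Import Order.TTheory GRing.Theory Num.Theory.
Local Open Scope ring_scope.

(* The cell of a simple combinatorial type is the set of vertex lifts, edge
   lengths and marked-point positions satisfying two affine equations per
   bounded edge, P_tgt = phi^twist (P_src + len * slope), together with open
   positivity conditions; the class conditions hold on the whole cell because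
   the intersection number with a generic fiber equals -sum slope_x * twist.
   So the cell has dimension 2 nv + ne + n minus the rank of the 2 ne edge
   equations.  These are independent: a linear relation among them is a
   self-stress of the curve, i.e. a vector on every half-edge, orthogonal to
   its slope and balanced at each vertex.  At a trivalent immersed vertex such
   a stress is c times the rotated slopes, so it vanishes at a vertex as soon
   as it vanishes on one half-edge; it vanishes on the ends and is transported
   along the bounded edges, hence vanishes on the connected curve.  Finally
   3 nv = 2 ne + |mu| and ne + 1 = nv + g turn 2 nv - ne + n into
   |mu| + g - 1 + n. *)

Section OpenSubsetOfFiber.
Variables (R : realType) (U : lmodType R) (D E : nat).
Variable frame : {linear 'rV[R]_D -> U}.
Variable coord : U -> 'rV[R]_D.
Hypotheses (frameK : cancel frame coord) (coordK : cancel coord frame).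
Variable F : {linear U -> 'rV[R]_E}.
(* [F] is onto, phrased dually: no nonzero row is orthogonal to its image. *)
Hypothesis F_onto : forall w : 'rV_E, (forall X, F X *m w^T = 0) -> w = 0.

Let M := lin1_mx (F \o frame).

Let mulmx_frame u : u *m M = F (frame u).
Proof. exact: mul_rV_lin1. Qed.

Lemma kermx_frame_rank : \rank (kermx M) = (D - E)%N.
Proof.
rewrite mxrank_ker -mxrank_tr; congr (_ - _)%N; apply/eqP.
apply: inj_row_free => w wM0; apply: F_onto => X.
by rewrite -(coordK X) -mulmx_frame -mulmxA -[M]trmxK -trmx_mul wM0 trmx0 mulmx0.
Qed.

Lemma aff_indep_in_fiber_le (P : U -> Prop) tau k (p : 'I_k.+1 -> U) :
  (forall X, P X -> F X = tau) -> (forall i, P (p i)) -> aff_indep p ->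
  (k <= D - E)%N.
Proof.
move=> PF Pp indep_p.
pose B := \matrix_(i < k) coord (p (lift ord0 i) - p ord0).
have B_ker : (B <= kermx M)%MS.
  apply/row_subP => i; rewrite rowK; apply/sub_kermxP.
  by rewrite mulmx_frame coordK linearB /= !PF // subrr.
have /eqP rankB : row_free B.
  apply: inj_row_free => c cB0; apply/rowP => i; rewrite mxE.
  apply: (indep_p (c 0)); rewrite -[RHS](linear0 frame) -cB0 mulmx_sum_row linear_sum.
  by apply: eq_bigr => j _; rewrite linearZ rowK /= coordK.
by rewrite -kermx_frame_rank -[k]rankB mxrankS.
Qed.

Lemma aff_indep_in_open_fiber (P : U -> Prop) X0 :
  P X0 -> (forall Y, F Y = 0 -> exists2 eps, 0 < eps & P (X0 + eps *: Y)) ->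
  exists2 p : 'I_(D - E).+1 -> U, (forall i, P (p i)) & aff_indep p.
Proof.
move=> PX0 P_open; rewrite -kermx_frame_rank.
pose K := row_base (kermx M); pose Y i := frame (row i K).
have Y_open i : exists e, 0 < e /\ P (X0 + e *: Y i).
  have [|e e0 Pe] := P_open (Y i); last by exists e.
  rewrite /Y -mulmx_frame; apply/sub_kermxP.
  by rewrite (submx_trans (row_sub i K)) ?eq_row_base.
have [eps Peps] := fin_all_exists Y_open.
exists (fun j => if unlift ord0 j is Some i then X0 + eps i *: Y i else X0).
  by move=> j; case: unliftP => [i _|_] //; exact: (Peps i).2.
move=> c c0 i.
have cK0 : (\row_j (c j * eps j)) *m K = 0 *m K.
  apply: (can_inj frameK); rewrite mul0mx linear0 -[RHS]c0 mulmx_sum_row linear_sum.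
  by apply: eq_bigr => j _; rewrite liftK unlift_none addrAC subrr add0r linearZ mxE scalerA.
move/(row_free_inj (row_base_free _))/rowP/(_ i)/eqP: cK0.
by rewrite !mxE mulf_eq0 (gt_eqF (Peps i).1) orbF => /eqP.
Qed.

Lemma has_dim_open_fiber (P : U -> Prop) tau X0 :
  (forall X, P X -> F X = tau) -> P X0 ->
  (forall Y, F Y = 0 -> exists2 eps, 0 < eps & P (X0 + eps *: Y)) ->
  has_dim P (D - E).
Proof.
move=> PF PX0 P_open; split.
  by have [p Pp indep_p] := aff_indep_in_open_fiber PX0 P_open; exists p.
move=> p Pp /(aff_indep_in_fiber_le PF Pp); by rewrite ltnn.
Qed.

End OpenSubsetOfFiber.

Lemma pair_addE (U V : nmodType) (a c : U) (b d : V) :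
  (a, b) + (c, d) = (a + c, b + d).
Proof. by []. Qed.

Section LinearPart.
Variables (R : comPzRingType) (delta : bool).

(* [linphi b] is [A ^ b], where [A] is the linear part of [phi delta];
   [linphiT b] is its transpose. *)
Definition linphi (b : bool) (p : R * R) : R * R :=
  if b then (p.1, delta%:R * p.1 - p.2) else p.

Definition linphiT (b : bool) (z : R * R) : R * R :=
  if b then (z.1 + delta%:R * z.2, - z.2) else z.

Definition dot (z p : R * R) : R := z.1 * p.1 + z.2 * p.2.

Lemma dotBl z z' p : dot (z - z') p = dot z p - dot z' p.
Proof. by rewrite /dot /=; ring. Qed.

Lemma dotNl z p : dot (- z) p = - dot z p.
Proof. by rewrite /dot /=; ring. Qed.

Lemma dotNr z p : dot z (- p) = - dot z p.
Proof. by rewrite /dot /=; ring. Qed.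

Lemma dotBr z p q : dot z (p - q) = dot z p - dot z q.
Proof. by rewrite /dot /=; ring. Qed.

Lemma dot_suml (I : Type) (r : seq I) (P : pred I) (F : I -> R * R) p :
  dot (\sum_(i <- r | P i) F i) p = \sum_(i <- r | P i) dot (F i) p.
Proof. by rewrite /dot !raddf_sum !mulr_suml -big_split. Qed.

Lemma dot_eq0 z : (forall p, dot z p = 0) -> z = 0.
Proof.
case: z => x y z0; have := z0 (1, 0); have := z0 (0, 1).
by rewrite /dot /= !mulr0 !mulr1 add0r addr0 => -> ->.
Qed.

Lemma linphiD b p q : linphi b (p + q) = linphi b p + linphi b q.
Proof. by case: b p q => [] [x y] [x' y'] //; congr (_, _); rewrite /=; ring. Qed.

Lemma linphi_true_comp b p : linphi true (linphi b p) = linphi (~~ b) p.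
Proof. by case: b; rewrite /linphi //=; case: p => x y /=; congr (_, _); ring. Qed.

Lemma linphi_fst b p : (linphi b p).1 = p.1.
Proof. by case: b. Qed.

Lemma dot_linphi z b p : dot z (linphi b p) = dot (linphiT b z) p.
Proof. by case: b; rewrite /dot //=; ring. Qed.

Lemma linphiT_eq0 b z : (linphiT b z == 0) = (z == 0).
Proof.
case: b z => [] [x y] //; rewrite /linphiT /= !xpair_eqE oppr_eq0.
by case: (eqVneq y 0) => [->|]; rewrite ?andbF // mulr0 addr0.
Qed.

Lemma iter_affine (c : R * R) m p :
  iter m (fun q => linphi true q + c) p =
  linphi (odd m) p + iter m (fun q => linphi true q + c) 0.
Proof.
elim: m => [|m IH]; first by rewrite /= addr0.
by rewrite !iterS IH linphiD linphi_true_comp addrA.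
Qed.

End LinearPart.

Lemma iter_fst (R : nmodType) (S : Type) (f : R * S -> R * S) (a : R) m p :
  (forall q, (f q).1 = q.1 + a) -> (iter m f p).1 = p.1 + a *+ m.
Proof.
move=> fa; elim: m => [|m IH]; first by rewrite mulr0n addr0.
by rewrite iterS fa IH mulrSr addrA.
Qed.

Lemma iter_linphi (R : comPzRingType) delta m (p : R * R) :
  iter m (linphi delta true) p = linphi delta (odd m) p.
Proof. by elim: m => [|m IH] //; rewrite iterS IH linphi_true_comp. Qed.

Lemma linA_iterE delta t (s : int * int) :
  linA_iter delta t s = linphi delta (odd `|t|%N) s.
Proof.
have linA_linphi : linA delta =1 linphi delta true.
  by move=> [x y]; rewrite /linA /linphi natz.
by case: t => m; rewrite /linA_iter (eq_iter linA_linphi) iter_linphi.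
Qed.

Section PhiIterates.
Variables (R : realType) (delta : bool) (l : R).

Lemma phi_iter_affine t p :
  phi_iter delta l t p = linphi delta (odd `|t|%N) p + phi_iter delta l t 0.
Proof.
have phiE : phi delta l =1 fun q => linphi delta true q + (l, 0).
  by move=> [x y]; rewrite /phi /linphi pair_addE addr0.
have phi_invE : phi_inv delta l =1 fun q => linphi delta true q + (- l, - (delta%:R * l)).
  by move=> [x y]; rewrite /phi_inv /linphi pair_addE; congr (_, _); ring.
by case: t => m; rewrite /phi_iter ?(eq_iter phiE) ?(eq_iter phi_invE) iter_affine.
Qed.

Lemma phi_iter_fst t p : (phi_iter delta l t p).1 = p.1 + t%:~R * l.
Proof.
case: t => m; rewrite /phi_iter.
  by rewrite (@iter_fst _ _ _ l) // pmulrn mulr_natl.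
rewrite (@iter_fst _ _ _ (- l)) // NegzE intrN pmulrn mulNr mulr_natl; congr (_ + _); exact: mulNrn.
Qed.

End PhiIterates.

Definition slopeR (R : pzRingType) (s : int * int) : R * R := (s.1%:~R, s.2%:~R).

Lemma slopeR_linphi (R : comPzRingType) delta b (s : int * int) :
  slopeR R (linphi delta b s) = linphi delta b (slopeR R s).
Proof. by case: b; rewrite /slopeR //= rmorphB rmorphM /= rmorph_nat. Qed.

Lemma slopeRN (R : pzRingType) (s : int * int) : slopeR R (- s) = - slopeR R s.
Proof. by rewrite /slopeR /= !rmorphN. Qed.

Section CellCoordinates.
Variables (R : realType) (n : nat) (T : ctype n).

Definition cell_dim := ((nv T + nv T) + (ne T + n))%N.

Definition row_of_cell (X : cellpt R T) : 'rV[R]_cell_dim :=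
  row_mx (row_mx X.1.1 X.1.2) (row_mx X.2.1 X.2.2).

Definition cell_of_row (u : 'rV[R]_cell_dim) : cellpt R T :=
  ((lsubmx (lsubmx u), rsubmx (lsubmx u)), (lsubmx (rsubmx u), rsubmx (rsubmx u))).

Lemma row_of_cellK : cancel row_of_cell cell_of_row.
Proof.
move=> X; rewrite /cell_of_row /row_of_cell !(row_mxKl, row_mxKr).
by rewrite -!surjective_pairing.
Qed.

Lemma cell_of_rowK : cancel cell_of_row row_of_cell.
Proof. by move=> u; rewrite /cell_of_row /row_of_cell !hsubmxK. Qed.

Lemma cell_of_row_is_linear : linear cell_of_row.
Proof.
move=> a u v; apply: (can_inj row_of_cellK); rewrite cell_of_rowK.
by rewrite /row_of_cell /= -!add_row_mx -!scale_row_mx !hsubmxK.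
Qed.

End CellCoordinates.

HB.instance Definition _ (R : realType) n (T : ctype n) :=
  GRing.isLinear.Build R _ _ _ (@cell_of_row R n T) (@cell_of_row_is_linear R n T).

Section EdgeMap.
Variables (R : realType) (delta : bool) (n : nat) (T : ctype n).

Definition edge_head (X : cellpt R T) (e : 'I_(ne T)) : R * R :=
  ((vpos X (src T e)).1 + elen X e * ((eslope T e).1)%:~R,
   (vpos X (src T e)).2 + elen X e * ((eslope T e).2)%:~R).

Definition edge_defect (X : cellpt R T) (e : 'I_(ne T)) : R * R :=
  vpos X (tgt T e) - linphi delta (odd `|twist T e|%N) (edge_head X e).

Lemma edge_eqE l X e :
  vpos X (tgt T e) = phi_iter delta l (twist T e) (edge_head X e) <->
  edge_defect X e = phi_iter delta l (twist T e) 0.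
Proof.
rewrite phi_iter_affine /edge_defect.
by split=> [->|<-]; rewrite ?(addrC (linphi _ _ _)) ?addrK ?subrK.
Qed.

Definition twist_row (l : R) : 'rV[R]_(ne T + ne T) :=
  row_mx (\row_e (phi_iter delta l (twist T e) 0).1) (\row_e (phi_iter delta l (twist T e) 0).2).

Definition defect_row (X : cellpt R T) : 'rV[R]_(ne T + ne T) :=
  row_mx (\row_e (edge_defect X e).1) (\row_e (edge_defect X e).2).

Lemma defect_row_is_linear : linear defect_row.
Proof.
move=> a X Y; rewrite /defect_row scale_row_mx add_row_mx.
by congr row_mx; apply/rowP => e; rewrite !mxE /edge_defect /edge_head /vpos /elen /= !mxE;
  case: odd => /=; ring.
Qed.

Lemma edge_eqs_defect_row l X :
  (forall e, vpos X (tgt T e) = phi_iter delta l (twist T e) (edge_head X e)) <->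
  defect_row X = twist_row l.
Proof.
split=> [edge_eq | /eq_row_mx[/rowP eq1 /rowP eq2] e].
  by congr row_mx; apply/rowP => e; rewrite !mxE (proj1 (edge_eqE l X e) (edge_eq e)).
apply/edge_eqE; have := eq1 e; have := eq2 e; rewrite !mxE.
by case: (edge_defect X e) => x y /= -> ->; rewrite -surjective_pairing.
Qed.

Lemma defect_pairing X (w : 'rV[R]_(ne T + ne T)) :
  (defect_row X *m w^T) 0 0 =
  \sum_e dot (w 0 (lshift _ e), w 0 (rshift _ e)) (edge_defect X e).
Proof.
rewrite mxE big_split_ord /= -big_split; apply: eq_bigr => e _ /=.
by rewrite /defect_row row_mxEl row_mxEr !mxE /dot mulrC [_ * w 0 _]mulrC.
Qed.

End EdgeMap.

HB.instance Definition _ (R : realType) delta n (T : ctype n) :=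
  GRing.isLinear.Build R _ _ _ (@defect_row R delta n T) (@defect_row_is_linear R delta n T).

Lemma pair_norm_gt0 (x y : int) : (x, y) != 0 -> 0 < x * x + y * y.
Proof.
apply: contraNT; rewrite -leNgt => norm0.
have -> : x = 0 by nia.
by have -> : y = 0 by nia.
Qed.

Lemma balanced_triple_det (a1 b1 a2 b2 a3 b3 : int) :
  a1 + a2 + a3 = 0 -> b1 + b2 + b3 = 0 ->
  (a1, b1) != 0 -> (a2, b2) != 0 -> (a3, b3) != 0 ->
  ~~ pos_parallel (a1, b1) (a2, b2) -> ~~ pos_parallel (a1, b1) (a3, b3) ->
  ~~ pos_parallel (a2, b2) (a3, b3) -> a1 * b2 - b1 * a2 != 0.
Proof.
move=> sa sb /pair_norm_gt0 n1 /pair_norm_gt0 n2 /pair_norm_gt0 n3.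
rewrite /pos_parallel /= => p12 p13 p23; apply/eqP => det0.
(* Otherwise the three slopes are collinear with pairwise dot products q_ij <= 0;
   Lagrange's identity q12^2 = |s1|^2 |s2|^2 together with
   |s_i|^2 = - q_ij - q_ik forces some slope to vanish. *)
have ea3 : a3 = - (a1 + a2) by lia.
have eb3 : b3 = - (b1 + b2) by lia.
subst a3 b3.
have det13 : a1 * - (b1 + b2) - b1 * - (a1 + a2) = 0 by lia.
have det23 : a2 * - (b1 + b2) - b2 * - (a1 + a2) = 0 by lia.
rewrite det0 det13 det23 eqxx /= -!leNgt in p12 p13 p23.
have lagrange : (a1 * a2 + b1 * b2) ^+ 2 = (a1 * a1 + b1 * b1) * (a2 * a2 + b2 * b2).
  have : (a1 * a2 + b1 * b2) ^+ 2 + (a1 * b2 - b1 * a2) ^+ 2 =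
      (a1 * a1 + b1 * b1) * (a2 * a2 + b2 * b2) by ring.
  by rewrite det0 expr0n addr0.
nia.
Qed.

Definition rotslope (R : pzRingType) (c : R) (s : int * int) : R * R :=
  (- c * s.2%:~R, c * s.1%:~R).

Lemma perp_rotslope (R : numFieldType) (s : int * int) (z : R * R) :
  s != 0 -> dot z (slopeR R s) = 0 -> exists c, z = rotslope c s.
Proof.
case: s z => x y [z1 z2] /pair_norm_gt0 /lt0r_neq0; rewrite /dot /slopeR /= => nz zs.
have {}nz : x%:~R * x%:~R + y%:~R * y%:~R != 0 :> R by rewrite -!rmorphM -rmorphD intr_eq0.
exists ((z2 * x%:~R - z1 * y%:~R) / (x%:~R * x%:~R + y%:~R * y%:~R)).
rewrite /rotslope /=; congr (_, _); apply: (mulIf nz); rewrite ?mulNr mulrAC divfK //;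
  apply/eqP; rewrite -subr_eq0; apply/eqP.
  by transitivity (x%:~R * (z1 * x%:~R + z2 * y%:~R)); [ring | rewrite zs mulr0].
by transitivity (y%:~R * (z1 * x%:~R + z2 * y%:~R)); [ring | rewrite zs mulr0].
Qed.

Lemma balanced_triple_stress (R : numFieldType) (s1 s2 s3 : int * int) (z1 z2 z3 : R * R) :
  s1 + s2 + s3 = 0 -> s1 != 0 -> s2 != 0 -> s3 != 0 ->
  ~~ pos_parallel s1 s2 -> ~~ pos_parallel s1 s3 -> ~~ pos_parallel s2 s3 ->
  dot z1 (slopeR R s1) = 0 -> dot z2 (slopeR R s2) = 0 -> dot z3 (slopeR R s3) = 0 ->
  z1 + z2 + z3 = 0 ->
  exists c, [/\ z1 = rotslope c s1, z2 = rotslope c s2 & z3 = rotslope c s3].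
Proof.
move=> s0 n1 n2 n3 p12 p13 p23.
move=> /(perp_rotslope n1) [c1 ->] /(perp_rotslope n2) [c2 ->] /(perp_rotslope n3) [c3 ->].
have := balanced_triple_det _ _ n1 n2 n3 p12 p13 p23.
case: s1 s2 s3 s0 {n1 n2 n3 p12 p13 p23} => [a1 b1] [a2 b2] [a3 b3] [= sa sb].
move=> /(_ sa sb); rewrite -(intr_eq0 R) rmorphB !rmorphM /= => det_neq0.
rewrite /rotslope /= => -[= sy sx].
have ea3 : a3 = - (a1 + a2) by lia.
have eb3 : b3 = - (b1 + b2) by lia.
rewrite ea3 eb3 !rmorphN !rmorphD /= in sx sy *.
set X := c1 * a1%:~R + _ + _ in sx; set Y := - c1 * b1%:~R + _ + _ in sy.
have /eqP : (c1 - c3) * (a1%:~R * b2%:~R - b1%:~R * a2%:~R) = 0.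
  by transitivity (b2%:~R * X + a2%:~R * Y); [rewrite /X /Y; ring | rewrite sx sy !mulr0 addr0].
have /eqP : (c2 - c3) * (a1%:~R * b2%:~R - b1%:~R * a2%:~R) = 0.
  by transitivity (- b1%:~R * X - a1%:~R * Y); [rewrite /X /Y; ring | rewrite sx sy !mulr0 subr0].
rewrite !mulf_eq0 (negbTE det_neq0) !orbF !subr_eq0 => /eqP -> /eqP ->.
by exists c3.
Qed.

Section SelfStress.
Variables (R : realType) (delta : bool) (n : nat) (T : ctype n).
Variable w : 'I_(ne T) -> R * R.
Hypothesis w_stress : forall X : cellpt R T, \sum_e dot (w e) (edge_defect delta X e) = 0.

Let wT e := linphiT delta (odd `|twist T e|%N) (w e).

Lemma stress_virtual_work X :
  \sum_e (dot (w e) (vpos X (tgt T e)) - dot (wT e) (edge_head X e)) = 0.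
Proof. by rewrite -[RHS](w_stress X); apply: eq_bigr => e _; rewrite dotBr dot_linphi. Qed.

Lemma stress_perp e : dot (wT e) (slopeR R (eslope T e)) = 0.
Proof.
pose X : cellpt R T := ((0, 0), (\row_f (f == e)%:R, 0)).
have := stress_virtual_work X; rewrite (bigD1 e) //= big1 => [|f fe].
  rewrite /X /edge_head /vpos /elen /dot /= !mxE eqxx /=.
  by move=> h; rewrite -[RHS]oppr0 -h; ring.
by rewrite /X /edge_head /vpos /elen /dot /= !mxE (negbTE fe) /=; ring.
Qed.

Lemma stress_equilibrium v :
  \sum_(e | tgt T e == v) w e - \sum_(e | src T e == v) wT e = 0.
Proof.
apply: dot_eq0 => d; rewrite dotBl !dot_suml big_mkcond [in X in _ - X]big_mkcond -sumrB /=.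
pose X : cellpt R T := ((\row_u ((u == v)%:R * d.1), \row_u ((u == v)%:R * d.2)), (0, 0)).
rewrite -[RHS](stress_virtual_work X); apply: eq_bigr => e _.
rewrite /X /edge_head /vpos /elen /dot /= !mxE.
by case: (tgt T e == v); case: (src T e == v) => /=; ring.
Qed.

(* An edge carries the stress [w e] at its target and [- A^T (w e)] at its
   source; ends carry no stress. *)
Definition half_edges (v : 'I_(nv T)) : seq ((int * int) * (R * R)) :=
  [seq (eslope T e, - wT e) | e <- enum 'I_(ne T) & src T e == v] ++
  [seq (- linA_iter delta (twist T e) (eslope T e), w e) | e <- enum 'I_(ne T) & tgt T e == v] ++
  [seq (endslope T j, 0) | j <- enum 'I_(nend T) & endv T j == v].

Lemma half_edges_slopes v : map fst (half_edges v) = outgoing delta v.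
Proof. by rewrite /half_edges !map_cat -!map_comp. Qed.

Lemma half_edges_perp v p : p \in half_edges v -> dot p.2 (slopeR R p.1) = 0.
Proof.
rewrite !mem_cat => /or3P[] /mapP[e _ ->] /=.
- by rewrite dotNl stress_perp oppr0.
- by rewrite linA_iterE slopeRN dotNr slopeR_linphi dot_linphi stress_perp oppr0.
- by rewrite /dot /= !mul0r addr0.
Qed.

Lemma half_edges_equilibrium v : \sum_(p <- half_edges v) p.2 = 0.
Proof.
rewrite !big_cat !big_map !big_filter !big_enum_cond /= big1_eq addr0 sumrN addrC.
exact: stress_equilibrium.
Qed.

Hypotheses (T_bal : balanced delta T) (T_imm : immersion delta T).
Hypothesis T_tri : trivalent delta T.

Lemma half_edges_rotslope v :
  exists c, forall p, p \in half_edges v -> p.2 = rotslope c p.1.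
Proof.
have := T_imm v; have := T_bal v; rewrite -!half_edges_slopes all_map pairwise_map.
have := @half_edges_perp v; have := half_edges_equilibrium v.
have := T_tri v; rewrite -half_edges_slopes size_map.
case: (half_edges v) => [|[s1 z1] [|[s2 z2] [|[s3 z3] []]]] //= _.
rewrite !big_cons !big_nil !addr0 !addrA => z0 perp s0.
rewrite !andbT => /andP[/and3P[n1 n2 n3] /andP[/andP[p12 p13] p23]].
have m2 : (s2, z2) \in [:: (s1, z1); (s2, z2); (s3, z3)] by rewrite !inE eqxx ?orbT.
have m3 : (s3, z3) \in [:: (s1, z1); (s2, z2); (s3, z3)] by rewrite !inE eqxx ?orbT.
have [c [e1 e2 e3]] := balanced_triple_stress s0 n1 n2 n3 p12 p13 p23
  (perp _ (mem_head _ _)) (perp _ m2) (perp _ m3) z0.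
by exists c => p; rewrite !inE; case/or3P => /eqP ->.
Qed.

Definition unstressed v := forall p, p \in half_edges v -> p.2 = 0.

Lemma unstressedP v p : p \in half_edges v -> p.2 = 0 -> unstressed v.
Proof.
have [c rot] := half_edges_rotslope v => p_in p0.
have p1_neq0 : p.1 != 0.
  have /andP[/allP slopes_neq0 _] := T_imm v.
  by apply: slopes_neq0; rewrite -half_edges_slopes map_f.
suff c0 : c = 0 by move=> q /rot ->; rewrite c0 /rotslope /= oppr0 !mul0r.
move: p0 p1_neq0; rewrite (rot _ p_in); case: p.1 => [x y] /= [cy cx] xy_neq0.
apply/eqP; apply: contraTT xy_neq0 => c_neq0; rewrite negbK.
have /eqP : x%:~R = 0 :> R by apply: (mulfI c_neq0); rewrite cx mulr0.
have /eqP : y%:~R = 0 :> R.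
  by apply: (@mulfI _ (- c)); rewrite ?oppr_eq0 // cy mulr0.
by rewrite !intr_eq0 => /eqP -> /eqP ->.
Qed.

Lemma src_half_edge e : (eslope T e, - wT e) \in half_edges (src T e).
Proof. by rewrite !mem_cat map_f // mem_filter eqxx mem_enum. Qed.

Lemma tgt_half_edge e :
  (- linA_iter delta (twist T e) (eslope T e), w e) \in half_edges (tgt T e).
Proof. by rewrite !mem_cat map_f ?orbT // mem_filter eqxx mem_enum. Qed.

Lemma end_half_edge j : (endslope T j, 0) \in half_edges (endv T j).
Proof. by rewrite !mem_cat map_f ?orbT // mem_filter eqxx mem_enum. Qed.

Lemma unstressed_edge e : unstressed (src T e) <-> unstressed (tgt T e).
Proof.
have src_in := src_half_edge e; have tgt_in := tgt_half_edge e.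
have w0E : (- wT e == 0) = (w e == 0) by rewrite oppr_eq0 linphiT_eq0.
split=> [/(_ _ src_in) /eqP | /(_ _ tgt_in) /eqP].
  by rewrite w0E => /eqP; apply: unstressedP tgt_in.
by rewrite -w0E => /eqP; apply: unstressedP src_in.
Qed.

Lemma unstressed_connect u v : connect (@adj _ T) u v -> unstressed u -> unstressed v.
Proof.
move=> /connectP[p path_p ->]; elim: p u path_p => [|x p IH] u //= /andP[/existsP[e ux] px] su.
apply: IH px _; case/orP: ux => /andP[/eqP eu /eqP ex].
  by rewrite -ex; apply/unstressed_edge; rewrite eu.
by rewrite -eu; apply/unstressed_edge; rewrite ex.
Qed.

Lemma self_stress_eq0 : connected_type T -> (0 < nend T)%N -> forall e, w e = 0.
Proof.
move=> T_conn end_pos e; pose j := Ordinal end_pos.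
have end_unstressed := unstressedP (end_half_edge j) erefl.
exact: unstressed_connect (T_conn _ _) end_unstressed _ (tgt_half_edge e).
Qed.

End SelfStress.

Lemma defect_row_onto (R : realType) delta n (T : ctype n) :
  connected_type T -> balanced delta T -> immersion delta T -> trivalent delta T ->
  (0 < nend T)%N ->
  forall w : 'rV[R]_(ne T + ne T), (forall X, defect_row delta X *m w^T = 0) -> w = 0.
Proof.
move=> T_conn T_bal T_imm T_tri end_pos w Fw.
pose w2 e := (w 0 (lshift _ e), w 0 (rshift _ e)).
have w2_stress X : \sum_e dot (w2 e) (edge_defect delta X e) = 0.
  by rewrite -defect_pairing Fw mxE.
have w20 := self_stress_eq0 w2_stress T_bal T_imm T_tri T_conn end_pos.
apply/rowP => k; rewrite mxE; case: (split_ordP k) => e ->;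
  by case: (w20 e).
Qed.

Lemma size_filter_enum (I : finType) (P : pred I) (A : Type) (f : I -> A) :
  size [seq f i | i <- enum I & P i] = (\sum_(i | P i) 1)%N.
Proof. by rewrite size_map -sum1_size big_filter big_enum_cond. Qed.

Lemma sum_fibers_card (I J : finType) (f : I -> J) :
  (\sum_j \sum_(i | f i == j) 1)%N = #|I|.
Proof. by rewrite -sum1_card (partition_big f xpredT). Qed.

Section Combinatorics.
Variables (delta : bool) (n : nat) (T : ctype n).

Lemma trivalent_card : trivalent delta T -> (3 * nv T = 2 * ne T + nend T)%N.
Proof.
move=> T_tri; have : (\sum_(v : 'I_(nv T)) size (outgoing delta v) = \sum_(v : 'I_(nv T)) 3)%N.
  by apply: eq_bigr => v _; rewrite T_tri.
rewrite sum_nat_const card_ord mulnC => <-.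
under eq_bigr => v _ do rewrite /outgoing !size_cat !size_filter_enum.
by rewrite !big_split /= !sum_fibers_card !card_ord; lia.
Qed.

Lemma end_weight_gt0 j : immersion delta T -> (0 < weight (endslope T j))%N.
Proof.
move=> /(_ (endv T j)) /andP[/allP slopes_neq0 _].
have : endslope T j != 0.
  by apply: slopes_neq0; rewrite /outgoing !mem_cat map_f ?orbT // mem_filter eqxx mem_enum.
rewrite /weight gcdn_gt0; case: (endslope T j) => x y /=.
by apply: contraR; rewrite negb_or -!eqn0Ngt !absz_eq0 => /andP[/eqP -> /eqP ->].
Qed.

Lemma end_weight_le (mu : seq nat) j : has_profile T mu -> (0 < weight (endslope T j))%N ->
  (weight (endslope T j) <= size mu)%N.
Proof.
move=> T_mu w_gt0; rewrite leqNgt; apply/negP => size_lt.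
have : (0 < #|[pred k : 'I_(nend T) | weight (endslope T k) == weight (endslope T j)]|)%N.
  by apply/card_gt0P; exists j; rewrite inE.
by rewrite T_mu // nth_default // -ltnS prednK.
Qed.

Lemma nend_mu_card (mu : seq nat) : immersion delta T -> has_profile T mu ->
  nend T = mu_card mu.
Proof.
move=> T_imm T_mu.
have mu_nth (i : 'I_(size mu)) :
    nth 0%N mu i = (\sum_(j : 'I_(nend T) | weight (endslope T j) == i.+1) 1)%N.
  by rewrite -(T_mu i.+1) // sum1_card.
rewrite /mu_card sumnE (big_nth 0%N) big_mkord (eq_bigr _ (fun i _ => mu_nth i)).
rewrite (exchange_big_dep xpredT) //= -[LHS]card_ord -sum1_card; apply: eq_bigr => j _.
have w_gt0 : (0 < weight (endslope T j))%N by apply: end_weight_gt0.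
have w_le := end_weight_le T_mu w_gt0.
have k_lt : ((weight (endslope T j)).-1 < size mu)%N by rewrite prednK.
rewrite (big_pred1 (Ordinal k_lt)) // => i /=.
by rewrite -(inj_eq val_inj) /= -[RHS]eqSS prednK // eq_sym.
Qed.

End Combinatorics.

Lemma absz_mul_sign (s d : int) :
  (0 <= s -> 0 <= d) -> (s <= 0 -> d <= 0) -> `|s| * `|d| = s * d.
Proof. lia. Qed.

Section FiberIntersection.
Variables (R : realType) (delta : bool) (l : R) (n : nat) (T : ctype n).
Hypotheses (l_gt0 : 0 < l) (T_bal : balanced delta T) (T_vert : ends_vertical T).

Lemma balanced_fst v :
  \sum_(e | src T e == v) (eslope T e).1 = \sum_(e | tgt T e == v) (eslope T e).1.
Proof.
have /eqP := congr1 fst (T_bal v); rewrite raddf_sum /= /outgoing !big_cat !big_map.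
rewrite !big_filter !big_enum_cond /= (eq_bigr (fun=> 0) (fun j _ => T_vert j)) big1_eq addr0.
under [in X in _ + X]eq_bigr => e _ do rewrite /= linA_iterE linphi_fst.
by rewrite sumrN subr_eq0 => /eqP.
Qed.

Let floor_at (X : cellpt R T) (c : R) v := Num.floor (((vpos X v).1 - c) / l).

Lemma edge_crossings (X : cellpt R T) c e : in_cell delta l X ->
  `|(eslope T e).1| * crossings l X e c =
  (eslope T e).1 * (floor_at X c (tgt T e) - twist T e - floor_at X c (src T e)).
Proof.
case=> len_gt0 edge_eq _; rewrite /crossings /floor_at /=.
have head_fst : (vpos X (src T e)).1 + elen X e * ((eslope T e).1)%:~R =
    (vpos X (tgt T e)).1 - (twist T e)%:~R * l.
  by rewrite (edge_eq e) phi_iter_fst addrK.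
have l_inv_ge0 : 0 <= l^-1 by rewrite invr_ge0 ltW.
have len_ge0 := ltW (len_gt0 e).
rewrite absz_mul_sign.
- congr (_ * _); rewrite head_fst.
  have -> : ((vpos X (tgt T e)).1 - (twist T e)%:~R * l - c) / l =
      ((vpos X (tgt T e)).1 - c) / l - (twist T e)%:~R.
    by field; exact: lt0r_neq0.
  by rewrite floorDrz ?rpredN ?intr_int // -intrN intrKfloor.
- move=> s_ge0; rewrite subr_ge0; apply: le_floor; apply: ler_wpM2r => //.
  by rewrite lerD2r lerDl mulr_ge0 // ler0z.
- move=> s_le0; rewrite subr_le0; apply: le_floor; apply: ler_wpM2r => //.
  by rewrite lerD2r gerDl mulr_ge0_le0 // lerz0.
Qed.

Lemma fiber_int_cell (X : cellpt R T) c : in_cell delta l X ->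
  fiber_int l X c = - \sum_e (eslope T e).1 * twist T e.
Proof.
move=> X_cell; rewrite /fiber_int (eq_bigr _ (fun e _ => edge_crossings c e X_cell)).
have sum_by_vertex (f : 'I_(ne T) -> 'I_(nv T)) :
    \sum_e (eslope T e).1 * floor_at X c (f e) =
    \sum_v floor_at X c v * \sum_(e | f e == v) (eslope T e).1.
  rewrite (partition_big f xpredT) //=; apply: eq_bigr => v _.
  by rewrite mulr_sumr; apply: eq_bigr => e /eqP ->; rewrite mulrC.
have tgt_src : \sum_e (eslope T e).1 * floor_at X c (tgt T e) =
    \sum_e (eslope T e).1 * floor_at X c (src T e).
  by rewrite !sum_by_vertex; apply: eq_bigr => v _; rewrite balanced_fst.
rewrite (eq_bigr (fun e => (eslope T e).1 * floor_at X c (tgt T e) -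
    (eslope T e).1 * floor_at X c (src T e) - (eslope T e).1 * twist T e)) => [|e _].
  by rewrite !sumrB tgt_src subrr sub0r.
by rewrite mulrBr mulrBr addrAC.
Qed.

End FiberIntersection.

Lemma exists_below_pos (R : realFieldType) (ys : seq R) :
  exists2 c : R, 0 < c & forall y, y \in ys -> 0 < y -> c < y.
Proof.
elim: ys => [|y ys [c c_gt0 c_lt]]; first by exists 1.
have [y_gt0|y_le0] := ltP 0 y.
  exists (Num.min c (y / 2)) => [|z]; first by rewrite lt_min c_gt0 divr_gt0.
  by rewrite inE => /orP[/eqP ->|/c_lt lt_z] z_gt0; rewrite gt_min ?lt_z ?orbT //; lra.
exists c => // z; rewrite inE => /orP[/eqP -> y_gt0|/c_lt //].
by rewrite ltNge y_le0 in y_gt0.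
Qed.

Lemma exists_generic_fiber (R : realType) (l : R) (xs : seq R) : 0 < l ->
  exists c, forall x, x \in xs -> ~ is_intR ((x - c) / l).
Proof.
(* Take c in (0, l) below every positive residue of the xs modulo l. *)
move=> l_gt0; pose res x := x - (Num.floor (x / l))%:~R * l.
have [c c_gt0 c_lt] := exists_below_pos (l :: [seq res x | x <- xs]).
exists c => x x_in [m xcm].
have c_lt_l : c < l by apply: c_lt; rewrite ?inE ?eqxx.
have x_div : x / l = m%:~R + c / l by rewrite -xcm; field; exact: lt0r_neq0.
have floor_m : Num.floor (x / l) = m.
  apply: floor_def; rewrite x_div intrD lerDl divr_ge0 ?ltW //= ltrD2l.
  by rewrite ltr_pdivrMr // mul1r.
have res_x : res x = c.
  rewrite /res floor_m -[x](divfK (lt0r_neq0 l_gt0)) x_div mulrDl divfK ?lt0r_neq0 //.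
  by rewrite addrAC subrr add0r.
have : c < res x by rewrite c_lt ?inE ?map_f ?orbT ?res_x.
by rewrite res_x ltxx.
Qed.

Lemma exists_pos_perturbation (R : realFieldType) (I : finType) (a b : I -> R) :
  (forall i, 0 < a i) -> exists2 eps, 0 < eps & forall i, 0 < a i + eps * b i.
Proof.
move=> a_gt0; have [eps eps_gt0 eps_lt] := exists_below_pos [seq a i / `|b i| | i <- enum I].
exists eps => // i; have [->|b_neq0] := eqVneq (b i) 0; first by rewrite mulr0 addr0.
have : eps * `|b i| < a i.
  rewrite -ltr_pdivlMr ?normr_gt0 //; apply: eps_lt.
    by apply/mapP; exists i; rewrite ?mem_enum.
  by rewrite divr_gt0 ?normr_gt0.
have : eps * (- `|b i|) <= eps * b i by rewrite ler_pM2l // lerNl -normrN ler_norm.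
lra.
Qed.

Section CellLocus.
Variables (R : realType) (delta : bool) (l : R) (n : nat) (T : ctype n).
Hypothesis l_gt0 : 0 < l.

Lemma in_cell_defect (X : cellpt R T) :
  in_cell delta l X -> defect_row delta X = twist_row delta T l.
Proof. by case=> _ /edge_eqs_defect_row. Qed.

Lemma in_cell_perturb (X0 Y : cellpt R T) : in_cell delta l X0 -> defect_row delta Y = 0 ->
  exists2 eps, 0 < eps & in_cell delta l (X0 + eps *: Y).
Proof.
move=> X0_cell; have [len_gt0 _ mark_in] := X0_cell => FY0.
(* One positivity constraint per edge length, per marked point position and
   per gap between a marked point and the far end of its bounded edge. *)
pose a (i : 'I_(ne T) + ('I_n + 'I_n)) : R :=
  match i with
  | inl e => elen X0 e
  | inr (inl j) => mpos X0 j
  | inr (inr j) => if mark T j is inl e then elen X0 e - mpos X0 j else 1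
  end.
pose b (i : 'I_(ne T) + ('I_n + 'I_n)) : R :=
  match i with
  | inl e => elen Y e
  | inr (inl j) => mpos Y j
  | inr (inr j) => if mark T j is inl e then elen Y e - mpos Y j else 0
  end.
have a_gt0 i : 0 < a i.
  case: i => [e|[j|j]] /=; first exact: len_gt0.
    by move: (mark_in j); case: (mark T j) => [e /andP[]|].
  by move: (mark_in j); case: (mark T j) => [e /andP[_]|//]; rewrite subr_gt0.
have [eps eps_gt0 ab_gt0] := exists_pos_perturbation b a_gt0.
exists eps => //; split.
- by move=> e; have := ab_gt0 (inl e); rewrite /elen /= !mxE.
- apply/edge_eqs_defect_row.
  by rewrite addrC defect_row_is_linear FY0 scaler0 add0r in_cell_defect.
- move=> j; have := ab_gt0 (inr (inl j)); have := ab_gt0 (inr (inr j)).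
  rewrite /a /b /mpos /elen /= !mxE.
  case: (mark T j) => [e|_] /= lt_len mpos_gt0 //.
  by rewrite mpos_gt0 /= !mxE -subr_gt0; move: lt_len; rewrite mulrBr; lra.
Qed.

Lemma locus_of_in_cell a2 b2 (X0 X : cellpt R T) : balanced delta T ->
  locus delta l T a2 b2 X0 -> in_cell delta l X -> locus delta l T a2 b2 X.
Proof.
move=> T_bal [X0_cell [T_vert wt_b2 fiber_a2]] X_cell; split=> //; split=> // c _.
have [c0 c0_generic] := exists_generic_fiber [seq (vpos X0 v).1 | v <- enum 'I_(nv T)] l_gt0.
rewrite -(fiber_a2 c0) => [|v]; last by apply: c0_generic; apply/mapP; exists v; rewrite ?mem_enum.
by rewrite (fiber_int_cell l_gt0 T_bal T_vert c X_cell)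
  (fiber_int_cell l_gt0 T_bal T_vert c0 X0_cell).
Qed.

Lemma locus_perturb a2 b2 (X0 Y : cellpt R T) : balanced delta T ->
  locus delta l T a2 b2 X0 -> defect_row delta Y = 0 ->
  exists2 eps, 0 < eps & locus delta l T a2 b2 (X0 + eps *: Y).
Proof.
move=> T_bal X0_locus /(in_cell_perturb X0_locus.1) [eps eps_gt0 X_cell].
by exists eps => //; apply: locus_of_in_cell T_bal X0_locus X_cell.
Qed.

End CellLocus.

Theorem proposition2p12 (R : realType) (delta : bool) (l : R) (g n : nat)
    (a2 b2 : int) (mu : seq nat) :
  0 < l ->
  (2 %| b2 - (nat_of_bool delta)%:Z * a2)%Z ->
  (0 < mu_card mu)%N ->
  b2 = (mu_norm mu)%:Z ->
  forall T : ctype n, simple_type delta g mu T ->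
  (exists X, locus delta l T a2 b2 X) ->
  has_dim (V := cellpt R T) (locus delta l T a2 b2) (mu_card mu + g - 1 + n)%N.
Proof.
move=> l_gt0 _ mu_gt0 _ T [T_conn T_genus T_bal T_tri [T_imm T_vert T_mu]] [X0 X0_locus].
have nend_mu := nend_mu_card T_imm T_mu.
have -> : (mu_card mu + g - 1 + n = cell_dim T - (ne T + ne T))%N.
  by move: T_genus (trivalent_card T_tri); rewrite /has_genus /cell_dim nend_mu; lia.
have end_pos : (0 < nend T)%N by rewrite nend_mu.
apply: (has_dim_open_fiber (U := cellpt R T) (@cell_of_rowK R n T) (@row_of_cellK R n T)
  (@defect_row_onto R delta n T T_conn T_bal T_imm T_tri end_pos)
  (tau := twist_row delta T l) _ X0_locus) => [X [/in_cell_defect //]|Y].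
exact: locus_perturb.
Qed.
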